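(* Let $n\ge 1$ and let $\mathcal F \subseteq 2^{[n]}$ be a simply rooted family of sets such that $\emptyset \in \mathcal F$. Then the cubical set $X(\mathcal F)\subseteq \mathbb R^n$ is acyclic.
   Context: $[n]=\{1,\dots,n\}$ and $2^{[n]}$ is its power set. For $A,B\in 2^{[n]}$, $[A,B]=\{C\in 2^{[n]}: A\subseteq C\subseteq B\}$, and $[i,B]$ means $[\{i\},B]$. A family $\mathcal F\subseteq 2^{[n]}$ is simply rooted if for every non-empty $A\in\mathcal F$ there is $i\in A$ with $[i,A]\subseteq \mathcal F$. The set of cubes of $\mathcal F$ is $\mathcal C(\mathcal F)=\{[A,B]: A\subseteq B,\ [A,B]\subseteq \mathcal F\}$. For $A\subseteq B$, the geometric realization $|[A,B]|$ is $I_1\times\dots\times I_n\subseteq\mathbb R^n$ where $I_i=\{1\}$ if $i\in A$, $I_i=[0,1]$ if $i\in B\setminus A$, and $I_i=\{0\}$ if $i\notin B$. The geometric realization of $\mathcal F$ is the cubical set $X(\mathcal F)=\bigcup_{[A,B]\in\mathcal C(\mathcal F)}|[A,B]|$. A cubical set (finite union of elementary cubes, i.e. products of intervals $[a,b]$ with $a,b\in\mathbb Z$, $b-a\in\{0,1\}$) $X$ is acyclic if it is non-empty and connected and its cubical homology groups $H_i(X)$ are trivial for all $i\ge 1$. *)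

From HB Require Import structures.
From mathcomp Require Import all_boot all_order all_algebra.
From mathcomp Require Import all_classical all_reals all_analysis.
Set Implicit Arguments. Unset Strict Implicit. Unset Printing Implicit Defensive.
Import Order.TTheory GRing.Theory Num.Theory.
Import numFieldNormedType.Exports.
Local Open Scope classical_set_scope.
Local Open Scope ring_scope.

Definition simply_rooted (n : nat) (F : {set {set 'I_n}}) : Prop :=
  forall A, A \in F -> A != finset.set0 ->
    exists2 i, i \in A & forall C : {set 'I_n}, i \in C -> C \subset A -> C \in F.

Definition is_cube_of (n : nat) (F : {set {set 'I_n}}) (A B : {set 'I_n}) : Prop :=
  A \subset B /\ forall C : {set 'I_n}, A \subset C -> C \subset B -> C \in F.

Definition real_interval (R : realType) (n : nat) (A B : {set 'I_n})
  : set 'rV[R]_n :=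
  [set x | forall i : 'I_n,
     (i \in A -> x ord0 i = 1) /\
     (i \in B -> i \notin A -> 0 <= x ord0 i <= 1) /\
     (i \notin B -> x ord0 i = 0)].

Definition geom_real (R : realType) (n : nat) (F : {set {set 'I_n}})
  : set 'rV[R]_n :=
  [set x | exists A B, is_cube_of F A B /\ @real_interval R n A B x].

(* An elementary cube in R^n: coordinate i is the interval [a, a+1] if
   (Q i).2 = true (nondegenerate), and the point [a, a] otherwise, a = (Q i).1 *)
Definition ecube (n : nat) := {ffun 'I_n -> int * bool}.

Definition ecube_set (R : realType) (n : nat) (Q : ecube n) : set 'rV[R]_n :=
  [set x | forall i : 'I_n,
     ((Q i).1)%:~R <= x ord0 i <= ((Q i).1 + (Q i).2%:Z)%:~R].

Definition ecube_dim (n : nat) (Q : ecube n) : nat := #|[set i | (Q i).2]|.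

Definition ecube_upd (n : nat) (Q : ecube n) (i : 'I_n) (v : int * bool) : ecube n :=
  [ffun j => if j == i then v else Q j].

Definition ecube_sgn (n : nat) (Q : ecube n) (i : 'I_n) : int :=
  (-1) ^+ #|[set j : 'I_n | (j < i)%N && (Q j).2]|.

(* chains are formal Z-linear combinations, given as lists of (coefficient, cube) *)
Definition chain (n : nat) := seq (int * ecube n).

Definition coeff (n : nat) (c : chain n) (Q : ecube n) : int :=
  \sum_(p <- c | p.2 == Q) p.1.

Definition ecube_boundary (n : nat) (Q : ecube n) : chain n :=
  flatten [seq (if (Q i).2 then
                  [:: (ecube_sgn Q i, ecube_upd Q i ((Q i).1 + 1, false));
                      (- ecube_sgn Q i, ecube_upd Q i ((Q i).1, false))]
                else [::]) | i <- enum 'I_n].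

Definition boundary (n : nat) (c : chain n) : chain n :=
  flatten [seq [seq (p.1 * q.1, q.2) | q <- ecube_boundary p.2] | p <- c].

Definition chain_in (R : realType) (n : nat) (X : set 'rV[R]_n) (k : nat)
  (c : chain n) : Prop :=
  forall p, p \in c -> @ecube_set R n p.2 `<=` X /\ ecube_dim p.2 = k.

Definition trivial_homology (R : realType) (n : nat) (X : set 'rV[R]_n) (k : nat)
  : Prop :=
  forall c : chain n, chain_in X k c -> (forall Q, coeff (boundary c) Q = 0) ->
    exists d : chain n, chain_in X k.+1 d /\
      forall Q, coeff (boundary d) Q = coeff c Q.

Definition acyclic (R : realType) (n : nat) (X : set 'rV[R]_n) : Prop :=
  X !=set0 /\ connected X /\ forall k : nat, (1 <= k)%N -> trivial_homology X k.

From HB Require Import structures.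
From mathcomp Require Import all_boot all_order all_algebra.
From mathcomp Require Import all_classical all_reals all_analysis.
From mathcomp Require Import ring lra zify.
Import boot.fintype boot.finset.
Import numFieldNormedType.Exports.
Set Implicit Arguments. Unset Strict Implicit. Unset Printing Implicit Defensive.
Import Order.TTheory GRing.Theory Num.Theory.
Local Open Scope ring_scope.

(* The elementary cubes of X(F) are exactly the faces [G, B] of the unit cube
   with [G, B] contained in F, and cubical chains of X(F) are chains of such
   cells.  A k-cycle (k > 0) bounds by induction on |F|: let A be maximal in F.
   Simple rootedness yields x in A such that removing x from the bottom of a
   cube [G, A] of F gives again a cube of F; sweeping along coordinate x then
   contracts the cells with top A, so the part of the cycle on these cells is
   a boundary.  Subtracting it leaves a cycle of F minus A, which is again
   simply rooted.  X(F) is connected since every cube [A, B] of F is joined to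
   the origin through the cubes [{r}, A] and [emptyset, {r}], r a root of A. *)

Lemma sum_antisym_eq0 (R : numDomainType) (T : finType) (D : {set T}) (U : T -> T -> R) :
  {in D &, forall i j, i != j -> U j i = - U i j} ->
  \sum_(i in D) \sum_(j in D :\ i) U i j = 0.
Proof.
move=> Uanti; pose V i j := if [&& i \in D, j \in D & j != i] then U i j else 0.
have -> : \sum_(i in D) \sum_(j in D :\ i) U i j = \sum_i \sum_j V i j.
  rewrite big_mkcond; apply: eq_bigr => i _; rewrite big_mkcond /=.
  case: ifP => iD; last by rewrite big1 // => j _; rewrite /V iD.
  by apply: eq_bigr => j _; rewrite /V !inE iD andbC.
have VN : \sum_i \sum_j V i j = - \sum_i \sum_j V i j.
  rewrite {1}exchange_big -sumrN; apply: eq_bigr => j _; rewrite -sumrN.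
  apply: eq_bigr => i _; rewrite /V andbCA eq_sym.
  by case: ifP => [/and3P[jD iD ij]|_]; [rewrite Uanti // eq_sym | rewrite oppr0].
have : (\sum_i \sum_j V i j) *+ 2 == 0 by rewrite mulr2n {1}VN addNr.
by rewrite mulrn_eq0 => /eqP.
Qed.

Lemma sum_indicator_mul (R : nzRingType) (T : finType) (x : T) (h : T -> R) :
  \sum_c (c == x)%:R * h c = h x.
Proof.
rewrite (bigD1 x) //= eqxx mul1r big1 ?addr0 // => c /negbTE ->.
by rewrite mul0r.
Qed.

Lemma in_set_predE (T : Type) (P : pred T) x : (x \in [set y | P y]%classic) = P x.
Proof. by apply/idP/idP => [/set_mem | /mem_set]. Qed.

Section Cells.
Variable n : nat.
Implicit Types (C D G B A : {set 'I_n}) (i j l x y : 'I_n).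

(* The orientation sign of ecube_sgn, as a function of the set of free
   coordinates. *)
Definition sign_before D j : int := (-1) ^+ #|[set l in D | (l < j)%N]|.

Lemma sign_beforeK D j : sign_before D j * sign_before D j = 1.
Proof. by rewrite /sign_before -[X in _ * X]mulr1 signrMK. Qed.

Lemma sign_beforeU1 D y l : y \notin D ->
  sign_before (y |: D) l = sign_before D l * (-1) ^+ (y < l)%N.
Proof.
move=> yD; rewrite /sign_before; case: (ltnP y l) => yl /=.
  rewrite (_ : [set m in y |: D | (m < l)%N] = y |: [set m in D | (m < l)%N]).
    by rewrite cardsU1 inE (negbTE yD) /= exprD mulrC.
  by apply/setP => m; rewrite !inE; case: (eqVneq m y) => [->|].
rewrite /= expr0 mulr1; congr (_ ^+ _); apply: eq_card => m; rewrite !inE.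
by case: (eqVneq m y) => [->|] //=; rewrite ltnNge yl andbF.
Qed.

Lemma sign_beforeD1 D y l : y \in D ->
  sign_before (D :\ y) l = sign_before D l * (-1) ^+ (y < l)%N.
Proof.
move=> yD; rewrite -{2}(setD1K yD) sign_beforeU1 ?setD11 // -mulrA.
by rewrite -signr_addb addbb mulr1.
Qed.

Lemma sign_ltn_swap i j : i != j -> (-1) ^+ (j < i)%N = - (-1) ^+ (i < j)%N :> int.
Proof. by case: (ltngtP i j) => // /val_inj ->; rewrite eqxx. Qed.

(* (G, B) is the face [G, B] of the unit cube: coordinates in G are 1, those in
   B :\: G are free, the others are 0; it is meaningful when G \subset B. *)
Definition cell := ({set 'I_n} * {set 'I_n})%type.
Implicit Types (a b c : cell) (F : {set {set 'I_n}}) (f g h : cell -> int) (k : nat).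

Definition cell_dim a := #|a.2 :\: a.1|.

Definition incidence a b : int :=
  \sum_(j in a.2 :\: a.1) sign_before (a.2 :\: a.1) j *
     ((b == (j |: a.1, a.2))%:R - (b == (a.1, a.2 :\ j))%:R).

Definition cell_boundary (f : cell -> int) b : int := \sum_a f a * incidence a b.

Lemma sum_incidence_mul G B (h : cell -> int) :
  \sum_c incidence (G, B) c * h c =
  \sum_(j in B :\: G) sign_before (B :\: G) j * (h (j |: G, B) - h (G, B :\ j)).
Proof.
under eq_bigr => c _ do rewrite /incidence big_distrl /=.
rewrite exchange_big /=; apply: eq_bigr => j _.
under eq_bigr do rewrite -mulrA mulrBl.
by rewrite -big_distrr sumrB /= !sum_indicator_mul.
Qed.

Lemma incidenceK a b : \sum_c incidence a c * incidence c b = 0.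
Proof.
case: a => G B; rewrite sum_incidence_mul; set D := B :\: G.
(* the codimension-2 faces in directions j and l, with a sign antisymmetric in j, l *)
pose T j l := sign_before D j * sign_before D l * (-1) ^+ (j < l)%N *
  ((b == (l |: (j |: G), B))%:R - (b == (j |: G, B :\ l))%:R
   - (b == (l |: G, B :\ j))%:R + (b == (G, B :\ j :\ l))%:R : int).
rewrite -[RHS](sum_antisym_eq0 (D := D) (U := T)); last first.
  move=> j l jD lD lj; rewrite /T sign_ltn_swap // setUCA !setDDl (setUC [set l] [set j]).
  ring.
apply: eq_bigr => j jD; rewrite /incidence /=.
have [DG DB] : B :\: (j |: G) = D :\ j /\ B :\ j :\: G = D :\ j.
  by split; rewrite /D !setDDl setUC.
rewrite DG DB -sumrB big_distrr; apply: eq_bigr => l lD /=.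
by rewrite sign_beforeD1 // /T; ring.
Qed.

Lemma cell_boundaryK f b : cell_boundary (cell_boundary f) b = 0.
Proof.
rewrite /cell_boundary; under eq_bigr do rewrite big_distrl /=.
rewrite exchange_big /=; apply: big1 => a _.
under eq_bigr do rewrite -mulrA.
by rewrite -big_distrr /= incidenceK mulr0.
Qed.

Lemma cell_boundaryD f g b :
  cell_boundary (fun a => f a + g a) b = cell_boundary f b + cell_boundary g b.
Proof. by rewrite /cell_boundary -big_split; apply: eq_bigr => a _; rewrite mulrDl. Qed.

Lemma cell_boundaryB f g b :
  cell_boundary (fun a => f a - g a) b = cell_boundary f b - cell_boundary g b.
Proof. by rewrite /cell_boundary -sumrB; apply: eq_bigr => a _; rewrite mulrBl. Qed.

Lemma eq_cell_boundary f g : f =1 g -> cell_boundary f =1 cell_boundary g.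
Proof. by move=> fg b; apply: eq_bigr => a _; rewrite fg. Qed.

Lemma incidence_neq0 a b : incidence a b != 0 ->
  exists2 j, j \in a.2 :\: a.1 & (b == (j |: a.1, a.2)) || (b == (a.1, a.2 :\ j)).
Proof.
move=> nz; apply/exists_inP; apply: contraNT nz => /exists_inP noface.
rewrite /incidence big1 // => j jD.
have /norP[/negbTE -> /negbTE ->] : ~~ ((b == (j |: a.1, a.2)) || (b == (a.1, a.2 :\ j))).
  by apply/negP => face; apply: noface; exists j.
by rewrite subrr mulr0.
Qed.

Definition valid_cell a := a.1 \subset a.2.

Definition cell_in F a : bool :=
  valid_cell a &&
  [forall C : {set 'I_n}, (a.1 \subset C) && (C \subset a.2) ==> (C \in F)].

Lemma cell_inP F a : reflect (is_cube_of F a.1 a.2) (cell_in F a).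
Proof.
apply: (iffP andP) => [[sub /forallP inF]|[sub inF]]; split => //.
  by move=> C lo hi; move: (inF C); rewrite lo hi.
by apply/forallP => C; apply/implyP => /andP[]; apply: inF.
Qed.

Lemma cell_in_valid F a : cell_in F a -> valid_cell a.
Proof. by case/andP. Qed.

Lemma valid_cell_faces a j : valid_cell a -> j \in a.2 :\: a.1 ->
  valid_cell (j |: a.1, a.2) && valid_cell (a.1, a.2 :\ j).
Proof.
rewrite /valid_cell => sub /setDP[j2 j1] /=.
by rewrite subUset sub1set j2 sub subsetD1 sub j1.
Qed.

Lemma incidence_valid a b : valid_cell a -> incidence a b != 0 -> valid_cell b.
Proof.
by move=> va /incidence_neq0[j jD /orP[]/eqP->]; case/andP: (valid_cell_faces va jD).
Qed.

Lemma cell_in_top F a : cell_in F a -> a.2 \in F.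
Proof. by move=> /cell_inP[sub inF]; apply: inF. Qed.

Lemma cell_in_subset F F' a : F \subset F' -> cell_in F a -> cell_in F' a.
Proof.
move=> FF' /cell_inP[sub inF]; apply/cell_inP; split => // C lo hi.
by apply: (subsetP FF'); apply: inF.
Qed.

Lemma cell_in_faces F a j : cell_in F a -> j \in a.2 :\: a.1 ->
  cell_in F (j |: a.1, a.2) && cell_in F (a.1, a.2 :\ j).
Proof.
move=> /cell_inP[sub inF]; rewrite inE => /andP[j1 j2].
apply/andP; split; apply/cell_inP; split => /=.
- by rewrite subUset sub1set j2.
- by move=> C /(subset_trans (subsetUr _ _)); apply: inF.
- by rewrite subsetD1 sub j1.
- by move=> C lo /subset_trans hi; apply: inF => //; apply: hi; apply: subsetDl.
Qed.

Lemma cell_dim_faces a j : j \in a.2 :\: a.1 ->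
  cell_dim a = (cell_dim (j |: a.1, a.2)).+1 /\ cell_dim a = (cell_dim (a.1, a.2 :\ j)).+1.
Proof.
move=> jD; rewrite /cell_dim /= (cardsD1 j) jD add1n; split; congr _.+1.
  by rewrite setDDl setUC.
by rewrite setDDl setDDl setUC.
Qed.

Definition supported F k f := forall a, f a != 0 -> cell_in F a && (cell_dim a == k).

Lemma supported_subset F F' k f : F \subset F' -> supported F k f -> supported F' k f.
Proof. by move=> FF' fF a /fF /andP[aF ->]; rewrite (cell_in_subset FF' aF). Qed.

Lemma supportedD F k f g :
  supported F k f -> supported F k g -> supported F k (fun a => f a + g a).
Proof.
move=> fF gF a; case: (eqVneq (f a) 0) => [-> | /fF //]; rewrite add0r; exact: gF.
Qed.

Lemma supportedB F k f g :
  supported F k f -> supported F k g -> supported F k (fun a => f a - g a).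
Proof.
move=> fF gF a; case: (eqVneq (f a) 0) => [->|/fF //]; rewrite sub0r oppr_eq0; exact: gF.
Qed.

Lemma supported_boundary F k f : supported F k.+1 f -> supported F k (cell_boundary f).
Proof.
move=> fF b nz; have [a /andP[fa iab]] : exists a, (f a != 0) && (incidence a b != 0).
  apply/existsP; apply: contraNT nz => /existsPn none.
  rewrite /cell_boundary big1 // => a _; apply/eqP; rewrite mulf_eq0.
  by have := none a; rewrite negb_and !negbK.
have /andP[aF /eqP adim] := fF a fa.
have [j jD /orP[]/eqP ->] := incidence_neq0 iab; have [dimU dimD] := cell_dim_faces jD;
  have /andP[upF downF] := cell_in_faces aF jD.
  by rewrite upF -eqSS -dimU adim eqxx.
by rewrite downF -eqSS -dimD adim eqxx.
Qed.

Definition rooted_at F A i := forall C : {set 'I_n}, i \in C -> C \subset A -> C \in F.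

Definition cone_point F A x :=
  forall G, cell_in F (G, A) -> x \in G -> cell_in F (G :\ x, A).

Lemma cone_point_full F A x : (forall C, C \subset A -> C \in F) -> cone_point F A x.
Proof.
move=> full G /cell_inP[/= GA _] _; apply/cell_inP; split => [|C _]; last exact: full.
by apply: subset_trans GA; apply: subsetDl.
Qed.

Lemma cone_point_root F A i x :
  rooted_at F A i -> A :\ i \notin F -> x != i -> cone_point F A x.
Proof.
move=> root AiF xi G /cell_inP[/= GA inF] xG; apply/cell_inP; split => /=.
  by apply: subset_trans GA; apply: subsetDl.
have iG : i \in G by apply: contraNT AiF => iG; apply: inF; rewrite ?subsetDl // subsetD1 GA iG.
by move=> C GC CA; apply: root CA; apply: (subsetP GC); rewrite !inE eq_sym xi.
Qed.

Lemma cone_point_lift F A i x :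
  rooted_at F A i -> cone_point F (A :\ i) x -> x != i -> cone_point F A x.
Proof.
move=> root cone xi G /cell_inP[/= GA inF] xG; apply/cell_inP; split => /=.
  by apply: subset_trans GA; apply: subsetDl.
move=> C GC CA; case: (boolP (i \in C)) => iC; first exact: root.
have iG : i \notin G by apply: contra iC => iG; apply: (subsetP GC); rewrite !inE eq_sym xi.
have GAi : cell_in F (G, A :\ i).
  apply/cell_inP; split => [|C' lo hi]; first by rewrite /= subsetD1 GA iG.
  by apply: inF => //; apply: subset_trans hi (subsetDl _ _).
by have /cell_inP[_] := cone G GAi xG; apply; rewrite // subsetD1 CA iC.
Qed.

Lemma simply_rooted_cone_point F A : simply_rooted F -> set0 \in F ->
  A \in F -> A != set0 -> exists2 x, x \in A & cone_point F A x.
Proof.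
move=> rootF F0 AF /set0Pn[x0 x0A].
suff [full | //] : (forall C, C \subset A -> C \in F) \/ exists2 x, x \in A & cone_point F A x.
  by exists x0 => //; apply: cone_point_full.
elim: {A}_.+1 {-2}A (ltnSn #|A|) AF {x0 x0A} => // m IH A Am AF.
have [-> | /(rootF A AF)[i iA root]] := eqVneq A set0.
  by left => C; rewrite subset0 => /eqP ->.
have Aim : (#|A :\ i| < m)%N by move: Am; rewrite (cardsD1 i A) iA.
have [AiF | AiF] := boolP (A :\ i \in F).
  have [fullAi | [x /setD1P[xi xA] cone]] := IH _ Aim AiF; [left | right].
    move=> C CA; have [iC | iC] := boolP (i \in C); first exact: root.
    by apply: fullAi; rewrite subsetD1 CA iC.
  by exists x => //; apply: cone_point_lift cone xi.
have /set0Pn[x /setD1P[xi xA]] : A :\ i != set0 by apply: contraNneq AiF => ->.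
by right; exists x => //; apply: cone_point_root root AiF xi.
Qed.

Implicit Types (w z : {set 'I_n} -> int).

Definition top_boundary A w G' : int :=
  \sum_(j in A :&: G') w (G' :\ j) * sign_before (A :\: (G' :\ j)) j.

Lemma incidence_top G A G' :
  incidence (G, A) (G', A) = \sum_(j in A :\: G) (G' == j |: G)%:R * sign_before (A :\: G) j.
Proof.
apply: eq_bigr => j /setDP[jA _] /=; rewrite !xpair_eqE eqxx andbT.
have /negbTE-> : A != A :\ j by apply: contraTneq jA => AAj; rewrite AAj setD11.
by rewrite andbF subr0 mulrC.
Qed.

Lemma sum_incidence_top A w G' :
  \sum_G w G * incidence (G, A) (G', A) = top_boundary A w G'.
Proof.
under eq_bigr do rewrite incidence_top big_distrr big_mkcond /=.
rewrite exchange_big /top_boundary [RHS]big_mkcond /=; apply: eq_bigr => j _.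
have faceE G : (j \in A :\: G) && (G' == j |: G) = (j \in A :&: G') && (G == G' :\ j).
  rewrite !inE; case: (boolP (j \in G)) => [jG | jG] /=.
    by apply/esym/negP => /andP[_ /eqP GE]; move: jG; rewrite GE setD11.
  case: (j \in A) => //=; apply/eqP/andP => [-> | [jG' /eqP ->]].
    by rewrite setU11 setU1K.
  by rewrite setD1K.
transitivity (\sum_(G | (j \in A :&: G') && (G == G' :\ j)) w G * sign_before (A :\: G) j).
  rewrite [RHS]big_mkcond; apply: eq_bigr => G _; rewrite -faceE.
  by case: (j \in A :\: G); case: (G' == j |: G); rewrite /= ?mul1r ?mul0r ?mulr0.
by case: (j \in A :&: G'); [rewrite big_pred1_eq | rewrite big_pred0].
Qed.

Lemma top_boundary_setU1 A w x G' : x \in A -> x \notin G' ->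
  top_boundary A w (x |: G') = w G' * sign_before (A :\: G') x +
    \sum_(j in A :&: G') w (x |: (G' :\ j)) * sign_before (A :\: (x |: (G' :\ j))) j.
Proof.
move=> xA xG; rewrite /top_boundary.
have -> : A :&: (x |: G') = x |: (A :&: G') by rewrite setIUr (setIidPr _) // sub1set.
rewrite big_setU1 ?inE ?(negbTE xG) ?andbF //= setU1K //; congr (_ + _).
apply: eq_bigr => j /setIP[_ jG]; have jx : j != x by apply: contraNneq xG => <-.
suff -> : (x |: G') :\ j = x |: (G' :\ j) by [].
by apply/setP => l; rewrite !inE; case: (eqVneq l x) => // ->; rewrite eq_sym jx.
Qed.

Lemma sign_before_cone A G x j : x \in A -> x \notin G -> j \in A :&: G ->
  sign_before (A :\: (G :\ j)) x * sign_before (A :\: (G :\ j)) j =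
  - (sign_before (A :\: G) x * sign_before (A :\: (x |: (G :\ j))) j).
Proof.
move=> xA xG /setIP[jA jG]; have jx : j != x by apply: contraNneq xG => <-.
have -> : sign_before (A :\: (G :\ j)) x = sign_before (A :\: G) x * (-1) ^+ (j < x)%N.
  rewrite -sign_beforeU1 ?inE ?jG ?andbF //; congr sign_before.
  by apply/setP => l; rewrite !inE; case: (eqVneq l j) => [->|].
have -> : sign_before (A :\: (G :\ j)) j =
          sign_before (A :\: (x |: (G :\ j))) j * (-1) ^+ (x < j)%N.
  rewrite -sign_beforeU1 ?inE ?eqxx ?andbF //; congr sign_before.
  by apply/setP => l; rewrite !inE; case: (eqVneq l x) => [->|]; rewrite ?xA ?(negbTE xG) ?andbF.
have sign2 : (-1) ^+ (j < x)%N * (-1) ^+ (j < x)%N = 1%R :> int by rewrite -signr_addb addbb.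
by rewrite (sign_ltn_swap jx) -[RHS]mulr1 -[1 in RHS]sign2; ring.
Qed.

(* Sweeps the cell (x |: G, A) along coordinate x onto (G, A); when x is a
   cone point this contracts the cells of F with top A. *)
Definition cone_chain A x z G : int :=
  if x \in G then 0 else sign_before (A :\: G) x * z (x |: G).

Lemma top_boundary_cone A x z G' : x \in A -> (forall G, top_boundary A z G = 0) ->
  top_boundary A (cone_chain A x z) G' = z G'.
Proof.
move=> xA zcyc; rewrite /top_boundary /cone_chain.
have [xG | xG] := boolP (x \in G').
  have xAG : x \in A :&: G' by rewrite inE xA xG.
  rewrite (bigD1 x xAG) /= big1 ?addr0 => [|j /andP[_ jx]]; last first.
    by rewrite !inE eq_sym jx xG mul0r.
  by rewrite !inE eqxx /= setD1K // mulrC mulrA sign_beforeK mul1r.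
have cyc := zcyc (x |: G'); rewrite top_boundary_setU1 // in cyc.
transitivity (- sign_before (A :\: G') x *
  \sum_(j in A :&: G') z (x |: (G' :\ j)) * sign_before (A :\: (x |: (G' :\ j))) j).
  rewrite big_distrr; apply: eq_bigr => j jAG /=.
  rewrite !inE (negbTE xG) andbF mulrAC sign_before_cone //; ring.
move/eqP: cyc; rewrite addrC addr_eq0 => /eqP ->.
by rewrite mulrN mulNr opprK mulrCA sign_beforeK mulr1.
Qed.

Lemma cone_chain_supported F A x k z : cone_point F A x -> x \in A ->
  (forall G, z G != 0 -> cell_in F (G, A) && (cell_dim (G, A) == k)) ->
  forall G, cone_chain A x z G != 0 -> cell_in F (G, A) && (cell_dim (G, A) == k.+1).
Proof.
move=> cone xA zF G; rewrite /cone_chain; case: ifP => // xG.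
rewrite mulf_eq0 negb_or => /andP[_ /zF /andP[GxF /eqP dimGx]].
have := cone _ GxF; rewrite setU11 setU1K ?xG // => /(_ isT) -> /=.
have xD : x \in A :\: G by rewrite inE xG xA.
have [-> _] := @cell_dim_faces (G, A) x xD.
by rewrite dimGx.
Qed.

Section MaximalSet.
Variables (F : {set {set 'I_n}}) (A : {set 'I_n}).
Hypotheses (AF : A \in F) (Amax : forall B, B \in F -> A \subset B -> B = A).

Lemma simply_rooted_setD1 : simply_rooted F -> simply_rooted (F :\ A).
Proof.
move=> rootF B /setD1P[BA BF] Bn0; have [i iB root] := rootF B BF Bn0.
exists i => // C iC CB; rewrite !inE root // andbT.
by apply: contraNneq BA => CA; apply/eqP/Amax => //; rewrite -CA.
Qed.

Lemma cell_in_setD1 G B : cell_in F (G, B) -> B != A -> cell_in (F :\ A) (G, B).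
Proof.
move=> /cell_inP[/= GB inF] BA; apply/cell_inP; split => // C lo hi.
rewrite !inE inF // andbT; apply: contraNneq BA => CA.
by apply/eqP/Amax; [exact: inF | rewrite -CA].
Qed.

Lemma supported_setD1 k f : supported F k f -> (forall G, f (G, A) = 0) ->
  supported (F :\ A) k f.
Proof.
move=> fF ftop [G B] fGB; have /andP[GBF ->] := fF _ fGB; rewrite andbT.
by apply: cell_in_setD1 => //; apply: contraNneq fGB => /= ->; rewrite ftop.
Qed.

(* No cell of F has a top strictly containing A, so a face with top A only
   comes from a cell with top A. *)
Lemma cell_boundary_top k f G' : supported F k f ->
  cell_boundary f (G', A) = top_boundary A (fun G => f (G, A)) G'.
Proof.
move=> fF; rewrite -sum_incidence_top /cell_boundary.
rewrite (eq_bigr (fun a => f (a.1, a.2) * incidence (a.1, a.2) (G', A))) => [|[] //].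
rewrite -(pair_bigA _ (fun G B => f (G, B) * incidence (G, B) (G', A))) /=.
apply: eq_bigr => G _; rewrite (bigD1 A) //= big1 ?addr0 // => B BA.
have [-> | /fF /andP[/cell_in_top /= BF _]] := eqVneq (f (G, B)) 0; first by rewrite mul0r.
have [-> | /incidence_neq0[j /= jD /orP[] /eqP[_ AB]]] := eqVneq (incidence (G, B) (G', A)) 0.
- by rewrite mulr0.
- by rewrite AB eqxx in BA.
- have AsubB : A \subset B by rewrite AB subsetDl.
  by rewrite (Amax BF AsubB) eqxx in BA.
Qed.

Lemma top_filler k f : simply_rooted F -> set0 \in F -> A != set0 ->
  supported F k f -> (forall b, cell_boundary f b = 0) ->
  exists2 W, supported F k.+1 W & forall G, cell_boundary W (G, A) = f (G, A).
Proof.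
move=> rootF F0 An0 fF fcyc.
have [x xA cone] := simply_rooted_cone_point rootF F0 AF An0.
pose z G := f (G, A).
have zcyc G' : top_boundary A z G' = 0 by rewrite -(cell_boundary_top _ fF) fcyc.
pose W (a : cell) := if a.2 == A then cone_chain A x z a.1 else 0.
have WF : supported F k.+1 W.
  move=> [G B]; rewrite /W /=; have [-> | _] := eqVneq B A; last by rewrite eqxx.
  by apply: cone_chain_supported cone xA _ G => G' /fF.
by exists W => // G; rewrite (cell_boundary_top _ WF) /W /= eqxx top_boundary_cone.
Qed.

End MaximalSet.

Lemma supported_vertex F k f : (0 < k)%N -> F \subset [set set0] ->
  supported F k f -> forall a, f a = 0.
Proof.
move=> k0 F0 fF a; apply/eqP; apply: contraT => /fF /andP[aF /eqP dim_a].
have /set1P a2 := subsetP F0 _ (cell_in_top aF).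
have /cell_inP[/= a12 _] := aF.
by move: k0; rewrite -dim_a /cell_dim a2 set0D cards0.
Qed.

Lemma cell_boundary_exact F k f : (0 < k)%N -> simply_rooted F -> set0 \in F ->
  supported F k f -> (forall b, cell_boundary f b = 0) ->
  exists2 g, supported F k.+1 g & forall b, cell_boundary g b = f b.
Proof.
move=> k0; elim: {F}_.+1 {-2}F (ltnSn #|F|) f => // m IH F Fm f rootF F0 fF fcyc.
pose nonempty := [pred A : {set 'I_n} | (A \in F) && (A != set0)].
have [/existsP[A0 A0F] | noA] := boolP [exists A, nonempty A]; last first.
  have f0 : forall a, f a = 0.
    apply: supported_vertex k0 _ fF; apply/subsetP => A AF; rewrite inE.
    by apply: contraR noA => An0; apply/existsP; exists A; rewrite /= AF.
  exists (fun=> 0) => [a | b]; first by rewrite eqxx.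
  by rewrite f0 /cell_boundary big1 // => a _; rewrite mul0r.
have [A /maxsetP[/andP[AF An0] Amax']] := ex_maxset (ex_intro _ A0 A0F).
have Amax B : B \in F -> A \subset B -> B = A.
  move=> BF AB; apply: Amax' (AB); rewrite /= BF /=.
  by apply: contraNneq An0 => B0; rewrite -subset0 -B0 AB.
have [W WF Wtop] := top_filler AF Amax rootF F0 An0 fF fcyc.
pose f' a := f a - cell_boundary W a.
have f'top G : f' (G, A) = 0 by rewrite /f' Wtop subrr.
have f'F : supported (F :\ A) k f' :=
  supported_setD1 Amax (supportedB fF (supported_boundary WF)) f'top.
have f'cyc b : cell_boundary f' b = 0 by rewrite cell_boundaryB fcyc cell_boundaryK subrr.
have F'm : (#|F :\ A| < m)%N by move: Fm; rewrite (cardsD1 A F) AF.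
have F'0 : set0 \in F :\ A by rewrite !inE F0 eq_sym An0.
have [g' g'F g'bd] := IH _ F'm f' (simply_rooted_setD1 Amax rootF) F'0 f'F f'cyc.
exists (fun a => W a + g' a) => [|b].
  exact: supportedD WF (supported_subset (subsetDl _ _) g'F).
by rewrite cell_boundaryD g'bd /f' addrC subrK.
Qed.

End Cells.

Section CubicalChains.
Variable n : nat.
Implicit Types (a b : cell n) (c d : chain n) (f g : cell n -> int) (Q : ecube n).

Definition cube_of a : ecube n :=
  [ffun i => if i \in a.1 then (1%Z, false) else if i \in a.2 then (0%Z, true) else (0%Z, false)].

Lemma cube_of_inj a b : valid_cell a -> valid_cell b -> cube_of a = cube_of b -> a = b.
Proof.
case: a b => [G B] [G' B'] /subsetP GB /subsetP GB' /ffunP eqQ.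
have mem1 i : (i \in G) = (i \in G') by move: (eqQ i); rewrite !ffunE; do !case: ifP.
have mem2 i : (i \in B) = (i \in B').
  have [iG | iG] := boolP (i \in G); first by rewrite GB // GB' // -mem1.
  by move: (eqQ i); rewrite !ffunE -mem1 (negbTE iG); do !case: ifP.
by congr pair; apply/setP.
Qed.

Lemma cube_of_snd a i : (cube_of a i).2 = (i \in a.2 :\: a.1).
Proof. by rewrite ffunE inE; do !case: ifP. Qed.

Lemma ecube_dim_cube_of a : ecube_dim (cube_of a) = cell_dim a.
Proof. by apply: eq_card => i; rewrite in_set_predE cube_of_snd. Qed.

Lemma ecube_sgn_cube_of a i : ecube_sgn (cube_of a) i = sign_before (a.2 :\: a.1) i.
Proof. by congr (_ ^+ _); apply: eq_card => j; rewrite in_set_predE cube_of_snd !inE andbC. Qed.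

Lemma ecube_upd_cube_of a i : i \in a.2 :\: a.1 ->
  ecube_upd (cube_of a) i ((cube_of a i).1 + 1, false) = cube_of (i |: a.1, a.2) /\
  ecube_upd (cube_of a) i ((cube_of a i).1, false) = cube_of (a.1, a.2 :\ i).
Proof.
move=> /setDP[i2 /negbTE i1]; split; apply/ffunP => j; rewrite !ffunE !inE /=;
  by case: (eqVneq j i) => [->|]; rewrite ?i1 ?i2.
Qed.

Lemma coeff_ecube_boundary a Q :
  coeff (ecube_boundary (cube_of a)) Q =
  \sum_(j in a.2 :\: a.1) sign_before (a.2 :\: a.1) j *
     ((Q == cube_of (j |: a.1, a.2))%:R - (Q == cube_of (a.1, a.2 :\ j))%:R).
Proof.
rewrite /coeff big_flatten big_map big_enum [RHS]big_mkcond /=; apply: eq_bigr => i _.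
rewrite cube_of_snd; case: ifP => iD; last by rewrite big_nil.
have [-> ->] := ecube_upd_cube_of iD.
rewrite !big_cons big_nil ecube_sgn_cube_of !(eq_sym Q).
by do 2!case: (_ == Q); rewrite /= ?addr0 ?add0r ?subr0 ?sub0r ?mulr1 ?mulr0 ?mulrN1 ?subrr.
Qed.

Lemma coeff_ecube_boundary_cell a b : valid_cell a -> valid_cell b ->
  coeff (ecube_boundary (cube_of a)) (cube_of b) = incidence a b.
Proof.
move=> va vb; rewrite coeff_ecube_boundary; apply: eq_bigr => j jD.
have /andP[vU vD] := valid_cell_faces va jD.
have cubeE a' : valid_cell a' -> (cube_of b == cube_of a') = (b == a').
  by move=> va'; apply/eqP/eqP => [/cube_of_inj->|->].
by rewrite !cubeE.
Qed.

Definition cellular c := forall p, p \in c -> exists2 a, valid_cell a & p.2 = cube_of a.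

Definition cells_of c a : int := if valid_cell a then coeff c (cube_of a) else 0.

Definition chain_of g : chain n := [seq (g a, cube_of a) | a <- enum [pred a | g a != 0]].

Lemma coeff_boundary c Q :
  coeff (boundary c) Q = \sum_(p <- c) p.1 * coeff (ecube_boundary p.2) Q.
Proof.
rewrite /coeff /boundary big_flatten big_map; apply: eq_bigr => p _.
by rewrite big_map big_distrr.
Qed.

Lemma coeff_cellular_out c Q : cellular c ->
  (forall b, valid_cell b -> Q != cube_of b) -> coeff c Q = 0.
Proof.
move=> cc Qout; rewrite /coeff big1_seq // => p /andP[/eqP pQ pc].
by have [a va pa] := cc p pc; move: (Qout a va); rewrite -pa pQ eqxx.
Qed.

Lemma cellular_boundary c : cellular c -> cellular (boundary c).
Proof.
move=> cc p /flattenP[s /mapP[r rc ->] /mapP[q qb ->]] /=.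
have [a va ra] := cc r rc; move: qb; rewrite ra => /flattenP[s' /mapP[i _ ->]].
rewrite cube_of_snd; case: ifP => [iD | _] //.
have [-> ->] := ecube_upd_cube_of iD; have /andP[vU vD] := valid_cell_faces va iD.
by rewrite !inE => /orP[] /eqP ->; [exists (i |: a.1, a.2) | exists (a.1, a.2 :\ i)].
Qed.

Lemma sum_cellular c (h : ecube n -> int) : cellular c ->
  \sum_(p <- c) p.1 * h p.2 = \sum_a cells_of c a * h (cube_of a).
Proof.
move=> cc; symmetry.
transitivity (\sum_a \sum_(p <- c | valid_cell a && (p.2 == cube_of a)) p.1 * h p.2).
  apply: eq_bigr => a _; rewrite /cells_of /coeff; case: (valid_cell a) => /=.
    by rewrite big_distrl; apply: eq_bigr => p /eqP ->.
  by rewrite mul0r big_pred0.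
under eq_bigr do rewrite big_mkcond /=.
rewrite exchange_big; apply: eq_big_seq => p pc.
have [a va pa] := cc p pc; rewrite (bigD1 a) //= va pa eqxx big1 ?addr0 // => a' a'a.
by case: ifP => // /andP[va' /eqP/(cube_of_inj va va') aa']; rewrite aa' eqxx in a'a.
Qed.

Lemma cells_of_boundary c : cellular c -> cells_of (boundary c) =1 cell_boundary (cells_of c).
Proof.
move=> cc b; rewrite /cells_of; case: ifP => vb.
  rewrite coeff_boundary (sum_cellular (fun Q => coeff (ecube_boundary Q) (cube_of b)) cc).
  apply: eq_bigr => a _.
  by rewrite /cells_of; case: ifP => va; rewrite ?mul0r ?coeff_ecube_boundary_cell.
symmetry; apply: big1 => a _; rewrite /cells_of; case: ifP => va; last by rewrite mul0r.
have [-> | /(incidence_valid va)] := eqVneq (incidence a b) 0; first by rewrite mulr0.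
by rewrite vb.
Qed.

Lemma cells_of_chain_of g : (forall a, g a != 0 -> valid_cell a) ->
  cells_of (chain_of g) =1 g.
Proof.
move=> gv b; rewrite /cells_of /coeff big_map big_enum_cond /=.
case: ifP => vb; last by apply/esym/eqP; apply: contraFT vb => gb; apply: gv.
have sameE a : (g a != 0) && (cube_of a == cube_of b) = (g a != 0) && (a == b).
  have [/gv va | //] := boolP (g a != 0).
  by apply/eqP/eqP => [/cube_of_inj-> // | ->].
rewrite (eq_bigl _ _ sameE) big_mkcondl big_pred1_eq.
by case: eqP.
Qed.

Lemma coeff_neq0 c Q : coeff c Q != 0 -> exists2 p, p \in c & p.2 = Q.
Proof.
move=> nz; suff /hasP[p pc /eqP pQ] : has (fun p => p.2 == Q) c by exists p.
apply: contraNT nz => /hasPn none; rewrite /coeff big1_seq // => p /andP[pQ /none].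
by rewrite pQ.
Qed.

Lemma coeff_cellular_eq c d : cellular c -> cellular d ->
  cells_of c =1 cells_of d -> coeff c =1 coeff d.
Proof.
move=> cc cd cdE Q.
have [/existsP[b /andP[vb /eqP->]] | none] := boolP [exists b, valid_cell b && (Q == cube_of b)].
  by move: (cdE b); rewrite /cells_of vb.
have Qout b : valid_cell b -> Q != cube_of b.
  by move=> vb; apply: contraNneq none => ->; apply/existsP; exists b; rewrite vb eqxx.
by rewrite !coeff_cellular_out.
Qed.

Lemma supported_valid F k g : supported F k g -> forall a, g a != 0 -> valid_cell a.
Proof. by move=> gF a /gF /andP[/cell_in_valid]. Qed.

Definition chain_on F k c :=
  forall p, p \in c -> exists2 a, cell_in F a && (cell_dim a == k) & p.2 = cube_of a.

Lemma chain_on_cellular F k c : chain_on F k c -> cellular c.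
Proof. by move=> cF p /cF[a /andP[/cell_in_valid va _] pa]; exists a. Qed.

Lemma chain_on_supported F k c : chain_on F k c -> supported F k (cells_of c).
Proof.
move=> cF a; rewrite /cells_of; case: ifP => va; last by rewrite eqxx.
move=> /coeff_neq0[p /cF[a' a'F pa'] pa]; move: (a'F) => /andP[/cell_in_valid va' _].
by rewrite -(cube_of_inj va' va) // -pa' pa.
Qed.

Lemma chain_on_chain_of F k g : supported F k g -> chain_on F k (chain_of g).
Proof. by move=> gF p /mapP[a]; rewrite mem_enum => /gF aF ->; exists a. Qed.

End CubicalChains.

Section Realization.
Variables (R : realType) (n : nat).
Local Open Scope classical_set_scope.
Implicit Types (a : cell n) (F : {set {set 'I_n}}) (S T U : {set 'I_n}) (Q : ecube n)
  (x p q : 'rV[R]_n).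

Lemma ecube_set_cube_of a : valid_cell a -> @ecube_set R n (cube_of a) `<=` real_interval a.1 a.2.
Proof.
move=> /subsetP sub x xQ i; move: (xQ i); rewrite ffunE.
have [i1 | i1] := boolP (i \in a.1).
  by rewrite sub //= addr0 => xi; split=> [_|]; [apply/le_anti; rewrite andbC | split=> // _ /negP].
have [i2 | i2] := boolP (i \in a.2); rewrite /= ?addr0 => xi; do !split=> //.
by move=> _; apply/le_anti; rewrite andbC.
Qed.

Definition ecube_center Q : 'rV[R]_n := \row_i (((Q i).1)%:~R + ((Q i).2)%:R / 2).

Lemma ecube_center_in Q : ecube_set Q (ecube_center Q).
Proof.
move=> i; rewrite mxE; case: (Q i) => z [] /=; last by rewrite mul0r !addr0 lexx.
by rewrite intrD; apply/andP; split; lra.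
Qed.

Lemma real_interval_unit S T x i : real_interval S T x -> 0 <= x ord0 i <= 1.
Proof.
move=> /(_ i) [xS [xST xT]]; have [iS | iS] := boolP (i \in S).
  by rewrite xS // ler01 lexx.
by have [iT | iT] := boolP (i \in T); [exact: xST | rewrite xT // lexx ler01].
Qed.

Lemma center_unit_cases (v : int * bool) : 0 <= (v.1%:~R : R) + v.2%:R / 2 <= 1 ->
  [\/ v = (0%Z, false), v = (0%Z, true) | v = (1%Z, false)].
Proof.
case: v => z [] /= /andP[lo hi].
  have zlo : (0 : R) < (z + 1)%:~R by rewrite intrD; lra.
  have zhi : z%:~R < 1 :> R by lra.
  rewrite ltr0z in zlo; rewrite ltrz1 in zhi.
  have -> : z = 0 by lia.
  by constructor 2.
have zlo : (0 : R) <= z%:~R by lra.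
have zhi : z%:~R <= 1 :> R by lra.
rewrite ler0z in zlo; rewrite lerz1 in zhi.
have [->|->] : z = 0 \/ z = 1 by lia.
by constructor 1.
by constructor 3.
Qed.

Lemma ecube_sub_geom_real F Q : @ecube_set R n Q `<=` geom_real F ->
  exists2 a, cell_in F a & Q = cube_of a.
Proof.
(* the coordinates of the center are 0, 1/2 or 1, which determines the cell *)
move=> QX; set x := ecube_center Q.
have [S [T [[_ inF] xST]]] := QX x (ecube_center_in Q).
pose a : cell n := ([set i | x ord0 i == 1]%SET, [set i | x ord0 i != 0]%SET).
have Qa : Q = cube_of a.
  apply/ffunP => i; rewrite ffunE !inE /x mxE.
  have := real_interval_unit i xST; rewrite /x mxE => /center_unit_cases[] ->.
  - by rewrite /= mulr0z mul0r addr0 eqxx eq_sym oner_eq0.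
  - by rewrite /= mulr0z add0r lt_eqF ?gt_eqF //; lra.
  - by rewrite /= mul0r addr0 eqxx.
exists a => //; apply/cell_inP; split=> [|C lo hi].
  by apply/subsetP => i; rewrite !inE => /eqP->; rewrite oner_eq0.
apply: inF.
  by apply: subset_trans lo; apply/subsetP => i iS; rewrite inE (xST i).1.
apply: subset_trans hi _; apply/subsetP => i; rewrite inE; apply: contraR => iT.
by rewrite (xST i).2.2 ?eqxx.
Qed.

Definition vertex S : 'rV[R]_n := \row_i (i \in S)%:R.

Lemma vertex_in S U T : S \subset U -> U \subset T -> real_interval S T (vertex U).
Proof.
move=> /subsetP SU /subsetP UT i; rewrite mxE; split=> [/SU -> //|].
split=> [_ _|iT]; first by case: (i \in U); rewrite ?ler01 ?lexx.
by rewrite (contraNF (UT i) iT).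
Qed.

Definition segment p q : set 'rV[R]_n := (fun t : R => p + t *: (q - p)) @` `[0, 1].

Lemma segment_connected p q : connected (segment p q).
Proof.
apply: connected_continuous_connected; first exact: segment_connected.
apply: continuous_subspaceT => t.
have constp : {for t, continuous (fun=> p)} by exact: cst_continuous.
have scaleqp : {for t, continuous (fun u : R => u *: (q - p))} by apply: continuousZr_tmp.
exact: (continuousD constp scaleqp).
Qed.

Lemma segment_ends p q : segment p q p /\ segment p q q.
Proof.
split; [exists 0 | exists 1]; rewrite /= ?in_itv /= ?lexx ?ler01 //.
  by rewrite scale0r addr0.
by rewrite scale1r addrC subrK.
Qed.

Lemma real_interval_segment S T p q :
  real_interval S T p -> real_interval S T q -> segment p q `<=` real_interval S T.
Proof.
move=> pST qST _ [t /= t01 <-] i; move: t01; rewrite in_itv /= => /andP[t0 t1].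
have [p1 [p2 p3]] := pST i; have [q1 [q2 q3]] := qST i; rewrite !mxE.
split=> [iS | ]; first by rewrite p1 // q1 // subrr mulr0 addr0.
split=> [iT iS | iT]; last by rewrite p3 // q3 // subrr mulr0 addr0.
by have /andP[? ?] := p2 iT iS; have /andP[? ?] := q2 iT iS; apply/andP; split; nra.
Qed.

Lemma real_interval_component F S T p q : is_cube_of F S T ->
  real_interval S T p -> real_interval S T q -> connected_component (geom_real F) p q.
Proof.
move=> STF pST qST; have [segp segq] := segment_ends p q.
exists (segment p q) => //; split=> //; last exact: segment_connected.
by move=> y /(real_interval_segment pST qST) yST; exists S, T.
Qed.

Lemma chain_inP F k c : chain_in (@geom_real R n F) k c <-> chain_on F k c.
Proof.
split=> [cX p pc | cF p /cF[a /andP[aF /eqP adim] ->]].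
  have [pX pdim] := cX p pc; have [a aF pa] := ecube_sub_geom_real pX.
  by exists a => //; rewrite aF -ecube_dim_cube_of -pa pdim eqxx.
split; last by rewrite ecube_dim_cube_of.
move=> x /(ecube_set_cube_of (cell_in_valid aF)) xa.
by exists a.1, a.2; split=> //; apply/cell_inP.
Qed.

Lemma geom_real_vertex0 F : set0 \in F -> @geom_real R n F (vertex set0).
Proof.
move=> F0; exists set0, set0; split; last exact: vertex_in.
by split=> // C _; rewrite subset0 => /eqP->.
Qed.

Lemma geom_real_connected F : simply_rooted F -> set0 \in F -> connected (@geom_real R n F).
Proof.
move=> rootF F0; set X := geom_real F.
suff Xo x : X x -> connected_component X (vertex set0) x.
  have -> : X = connected_component X (vertex set0).
    by apply/seteqP; split=> [x /Xo // | ]; exact: connected_component_sub.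
  exact: component_connected.
move=> [A [B [ABF xAB]]]; have [AB inF] := ABF.
apply: connected_component_trans (real_interval_component ABF (vertex_in (subxx A) AB) xAB).
have [-> | /(rootF A (inF A (subxx A) AB))[r rA root]] := eqVneq A set0.
  by apply: connected_component_refl; apply: geom_real_vertex0.
have rAF : is_cube_of F [set r] A.
  by split=> [|C]; rewrite sub1set // => /root.
have r0F : is_cube_of F set0 [set r].
  split=> [|C _]; first exact: sub0set.
  rewrite subset1 => /orP[]/eqP-> //.
  by apply: root; rewrite ?set11 ?sub1set.
apply: (@connected_component_trans _ _ (vertex [set r])).
  by apply: real_interval_component r0F _ _; apply: vertex_in; rewrite ?sub0set.
by apply: real_interval_component rAF _ _; apply: vertex_in; rewrite ?sub1set ?set11 ?subxx.
Qed.

Lemma geom_real_trivial_homology F k : simply_rooted F -> set0 \in F -> (0 < k)%N ->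
  trivial_homology (@geom_real R n F) k.
Proof.
move=> rootF F0 k0 c /chain_inP cF ccyc.
have ccell := chain_on_cellular cF.
have fcyc b : cell_boundary (cells_of c) b = 0.
  by rewrite -cells_of_boundary // /cells_of ccyc; case: ifP.
have [g gF gbd] := cell_boundary_exact k0 rootF F0 (chain_on_supported cF) fcyc.
have dF := chain_on_chain_of gF; have dcell := chain_on_cellular dF.
exists (chain_of g); split; first exact/chain_inP.
apply: coeff_cellular_eq (cellular_boundary dcell) ccell _ => b.
by rewrite cells_of_boundary // (eq_cell_boundary (cells_of_chain_of (supported_valid gF))) gbd.
Qed.

End Realization.

Theorem theorem1 (R : realType) (n : nat) (F : {set {set 'I_n}}) :
  (1 <= n)%N -> simply_rooted F -> (finset.set0 : {set 'I_n}) \in F -> acyclic (@geom_real R n F).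
Proof.
move=> _ rootF F0; split; first by exists (vertex R set0); apply: geom_real_vertex0.
split; first exact: geom_real_connected.
by move=> k k1; apply: geom_real_trivial_homology.
Qed.
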